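(* Let $m,n\geq2$ and let $\mathbf p\in\mathbb R^m$, $\mathbf q\in\mathbb R^n$ be probability vectors with all entries strictly positive. If $P\in\mathcal C(\mathbf p,\mathbf q)$ is local optimal and $V(P)$ is a tree, then $|V(P)|=m+n-1$.
   Context: $\mathcal C(\mathbf p,\mathbf q)$: nonnegative $m\times n$ matrices $P=(p_{i,j})$ with row sums $p_i$, column sums $q_j$. $V(P)=\{(i,j):p_{i,j}\neq0\}$. Graph notions on $[m]\times[n]$: distinct points adjacent iff they share a row or column; a circuit is a cyclic sequence $v_0,\dots,v_{s-1}$ ($s\ge4$) of pairwise distinct points $v_k=(i_k,j_k)$ with (indices mod $s$) $v_k,v_{k+1}$ adjacent and $(i_{k+2}-i_k)(j_{k+2}-j_k)\neq0$ for all $k$; a tree is a connected subset with no circuit. $H(A)=-\sum a_{i,j}\log a_{i,j}$ ($0\log0=0$). Moves on $P$ (each yields $P'\in\mathcal C(\mathbf p,\mathbf q)$ by replacing the chosen submatrix $A$ by $A'$): (M1) distinct rows $i_1,i_2$, distinct columns $j_1,j_2$, $a_{s,t}=p_{i_s,j_t}$; if $\max(a_{1,1},a_{2,2})\ge\max(a_{1,2},a_{2,1})$, put $b=\min(a_{1,2},a_{2,1})$, $a'_{s,s}=a_{s,s}+b$, $a'_{1,2}=a_{1,2}-b$, $a'_{2,1}=a_{2,1}-b$. (M2) same replacement, allowed when $a_{1,1}+a_{1,2}\ge a_{2,1}+a_{2,2}$, $a_{1,1}+a_{2,1}\ge a_{1,2}+a_{2,2}$, $a_{1,2}\ge a_{2,1}$.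 (M3) distinct rows $i_1,i_2$, distinct columns $j_1,\dots,j_r$ ($r\ge2$), $a_{s,k}=p_{i_s,j_k}$, allowed when $a_{2,k}=0$ ($k\ge2$) and $\sum_{k\ge2}a_{1,k}\le a_{2,1}\le\sum_{k\ge1}a_{1,k}$; replace by $a'_{1,1}=\sum_ka_{1,k}$, $a'_{1,k}=0$, $a'_{2,1}=a_{2,1}-\sum_{k\ge2}a_{1,k}$, $a'_{2,k}=a_{1,k}$ ($k\ge2$); moves may also be applied with rows and columns exchanged. $P$ is local optimal if no such move produces $P'$ with $H(P')<H(P)$. *)

From HB Require Import structures.
From mathcomp Require Import all_boot all_order all_algebra.
From mathcomp Require Import all_classical all_reals exp.
Set Implicit Arguments. Unset Strict Implicit. Unset Printing Implicit Defensive.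
Import Order.TTheory GRing.Theory Num.Theory.
Local Open Scope ring_scope.

Section Defs.
Variable R : realType.

Definition xlogx (x : R) : R := if x == 0 then 0 else x * ln x.

Definition entropy m n (A : 'M[R]_(m, n)) : R :=
  - \sum_(i < m) \sum_(j < n) xlogx (A i j).

Definition coupling m n (p : 'I_m -> R) (q : 'I_n -> R) (P : 'M[R]_(m, n)) :=
  [/\ forall i j, 0 <= P i j,
      forall i, \sum_(j < n) P i j = p i &
      forall j, \sum_(i < m) P i j = q j].

Definition supp m n (P : 'M[R]_(m, n)) : {set 'I_m * 'I_n} :=
  [set x | P x.1 x.2 != 0].

(* Replacement used by moves M1 and M2:
   a'_{11} = a_{11}+b, a'_{22} = a_{22}+b, a'_{12} = a_{12}-b, a'_{21} = a_{21}-b *)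
Definition swap2 m n (P : 'M[R]_(m, n)) i1 i2 j1 j2 (b : R) : 'M[R]_(m, n) :=
  \matrix_(i, j)
    (P i j + b * (((i == i1) && (j == j1))%:R + ((i == i2) && (j == j2))%:R
                 - ((i == i1) && (j == j2))%:R - ((i == i2) && (j == j1))%:R)).

Definition moveM1 m n (P P' : 'M[R]_(m, n)) :=
  exists i1 i2 j1 j2, [/\ i1 != i2, j1 != j2,
    Num.max (P i2 j2) (P i1 j1) >= Num.max (P i1 j2) (P i2 j1) &
    P' = swap2 P i1 i2 j1 j2 (Num.min (P i1 j2) (P i2 j1))].

Definition moveM2 m n (P P' : 'M[R]_(m, n)) :=
  exists i1 i2 j1 j2, [/\ i1 != i2, j1 != j2,
    [/\ P i1 j1 + P i1 j2 >= P i2 j1 + P i2 j2,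
        P i1 j1 + P i2 j1 >= P i1 j2 + P i2 j2 &
        P i1 j2 >= P i2 j1] &
    P' = swap2 P i1 i2 j1 j2 (Num.min (P i1 j2) (P i2 j1))].

(* Move M3, in the row orientation: columns j_1 = j1 and {j_2,...,j_r} = J
   (r >= 2 means #|J| > 0; distinctness means j1 \notin J). *)
Definition moveM3_result m n (P : 'M[R]_(m, n)) i1 i2 j1 (J : {set 'I_n}) :
  'M[R]_(m, n) :=
  \matrix_(i, j)
    (if i == i1 then
       (if j == j1 then P i1 j1 + \sum_(k in J) P i1 k
        else if j \in J then 0 else P i j)
     else if i == i2 then
       (if j == j1 then P i2 j1 - \sum_(k in J) P i1 k
        else if j \in J then P i1 j else P i j)
     else P i j).

Definition moveM3 m n (P P' : 'M[R]_(m, n)) :=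
  exists i1 i2 j1 (J : {set 'I_n}), [/\ [/\ i1 != i2, j1 \notin J & (0 < #|J|)%N],
    (forall k, k \in J -> P i2 k = 0),
    \sum_(k in J) P i1 k <= P i2 j1 <= P i1 j1 + \sum_(k in J) P i1 k &
    P' = moveM3_result P i1 i2 j1 J].

Definition move_rows m n (P P' : 'M[R]_(m, n)) :=
  moveM1 P P' \/ moveM2 P P' \/ moveM3 P P'.

Definition move m n (P P' : 'M[R]_(m, n)) :=
  move_rows P P' \/ move_rows P^T P'^T.

Definition local_optimal m n (P : 'M[R]_(m, n)) :=
  forall P', move P P' -> ~ (entropy P' < entropy P).

End Defs.

Section Graph.
Variables m n : nat.
Notation pt := ('I_m * 'I_n)%type.

Definition adjacent (u v : pt) : bool :=
  (u != v) && ((u.1 == v.1) || (u.2 == v.2)).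

Definition is_circuit (c : seq pt) : bool :=
  [&& (4 <= size c)%N, uniq c &
   [forall k : 'I_(size c),
      let v0 := tnth (in_tuple c) k in
      let v1 := nth v0 c ((k + 1) %% size c) in
      let v2 := nth v0 c ((k + 2) %% size c) in
      adjacent v0 v1 && ((v2.1 != v0.1) && (v2.2 != v0.2))]].

Definition connected_set (S : {set pt}) : Prop :=
  forall u v, u \in S -> v \in S ->
    exists s : seq pt, [&& path adjacent u s, last u s == v & all (mem S) s].

Definition is_tree (S : {set pt}) : Prop :=
  connected_set S /\
  ~ (exists c : seq pt, is_circuit c /\ all (mem S) c).

End Graph.

From mathcomp Require Import all_boot all_order all_algebra.
From mathcomp Require Import reals zify.
Import Order.TTheory Num.Theory.

Set Implicit Arguments. Unset Strict Implicit. Unset Printing Implicit Defensive.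

(* View S \subset [m] x [n] as the edge set of a bipartite graph on the m + n
   lines (rows and columns), the point (i, j) joining row i to column j.
   Positive marginals force every line to meet the support.  If S is
   connected, adding its points one at a time, each adjacent to an earlier
   one, brings in at most one new line per point, so S meets at most
   #|S| + 1 lines.  If S has no circuit, some point is alone on one of its
   lines: otherwise a longest zigzag (a path turning at every point) could be
   extended at its start or closed into a circuit.  Removing that point loses
   a line, so by induction S meets at least #|S| + 1 lines. *)

Lemma path_exit (T : eqType) (e : rel T) (A : {pred T}) a s :
  a \in A -> path e a s -> last a s \notin A ->
  exists x y, [/\ x \in A, y \notin A, e x y & y \in s].
Proof.
elim: s a => [|y s IH] a aA /=; first by rewrite aA.
move=> /andP[e_ay path_s] last_s; have [yA|yA] := boolP (y \in A).
  by have [x [z [xA zA e_xz zs]]] := IH y yA path_s last_s; exists x, z; rewrite inE zs orbT.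
by exists a, y; rewrite inE eqxx.
Qed.

Section Lines.
Variables m n : nat.
Notation pt := ('I_m * 'I_n)%type.
Implicit Types (S T : {set pt}) (b : bool) (u v w x y : pt).

Definition line b x : 'I_m + 'I_n := if b then inl x.1 else inr x.2.

Definition lines S := [set L | [exists x in S, exists b, line b x == L]].

Definition circuit_free S := ~ exists c, is_circuit c /\ all (mem S) c.

Definition differ v w := (v.1 != w.1) && (v.2 != w.2).

Lemma line_eqE b v w : (line b v == line b w) = (if b then v.1 == w.1 else v.2 == w.2).
Proof. by case: b. Qed.

Lemma pt_eq_lines b v w :
  (v == w) = (line b v == line b w) && (line (~~ b) v == line (~~ b) w).
Proof. by case: v w b => [v1 v2] [w1 w2] [|]; rewrite !line_eqE xpair_eqE // andbC. Qed.

Lemma differE b v w :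
  differ v w = (line b v != line b w) && (line (~~ b) v != line (~~ b) w).
Proof. by case: b; rewrite !line_eqE // andbC. Qed.

Lemma differC v w : differ v w = differ w v.
Proof. by rewrite /differ eq_sym [w.2 == _]eq_sym. Qed.

Lemma adjacentE b v w :
  adjacent v w = (v != w) && ((line b v == line b w) || (line (~~ b) v == line (~~ b) w)).
Proof. by case: b; rewrite !line_eqE // orbC. Qed.

Lemma neq_line_eqN b v w :
  v != w -> line b v = line b w -> line (~~ b) v != line (~~ b) w.
Proof. by rewrite (pt_eq_lines b) => + eb; rewrite eb eqxx. Qed.

Lemma adjacent_line_neqN b v w :
  adjacent v w -> line b v != line b w -> line (~~ b) v = line (~~ b) w.
Proof. by rewrite (adjacentE b) => /andP[_ /orP[/eqP->|/eqP//]]; rewrite eqxx. Qed.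

Lemma mem_lines S b x : x \in S -> line b x \in lines S.
Proof. by move=> xS; rewrite inE; apply/exists_inP; exists x => //; apply/existsP; exists b. Qed.

Lemma linesS S T : S \subset T -> lines S \subset lines T.
Proof.
move=> ST; apply/subsetP => L; rewrite !inE => /exists_inP[x xS xL].
by apply/exists_inP; exists x => //; apply: (subsetP ST).
Qed.

Lemma lines_set1 x : lines [set x] = [set line true x; line false x].
Proof.
apply/setP => L; rewrite !inE; apply/exists_inP/orP.
  by case=> y /set1P-> /existsP[[] /eqP<-]; [left | right].
by case=> /eqP->; exists x; rewrite ?inE //; apply/existsP; [exists true|exists false].
Qed.

Lemma card_lines_set1 x : #|lines [set x]| = 2.
Proof. by rewrite lines_set1 cards2. Qed.

Lemma lines_setU1 S x b :
  line b x \in lines S -> lines (x |: S) \subset line (~~ b) x |: lines S.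
Proof.
move=> xSb; apply/subsetP => L; rewrite inE => /exists_inP[y].
move=> /setU1P[->|yS] /existsP[c /eqP<-]; last by rewrite in_setU1 mem_lines ?orbT.
by rewrite in_setU1; case: c b xSb => -[] xSb; rewrite ?eqxx ?xSb ?orbT.
Qed.

Lemma connected_exit S T t0 v : connected_set S -> T \subset S -> t0 \in T -> v \in S :\: T ->
  exists t x, [/\ t \in T, x \in S :\: T & adjacent t x].
Proof.
move=> conn TS t0T /setDP[vS vT].
have [s /and3P[adj_s /eqP last_s /allP sS]] := conn t0 v (subsetP TS t0 t0T) vS.
have := path_exit t0T adj_s; rewrite last_s => /(_ vT)[t [x [tT xT adj_tx xs]]].
by exists t, x; rewrite inE xT (sS x xs : x \in S).
Qed.

Lemma lines_grow S T t0 : connected_set S -> T \subset S -> t0 \in T ->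
  (#|lines S| <= #|lines T| + #|S :\: T|)%N.
Proof.
move=> conn; have [k] := ubnP #|S :\: T|; elim: k T t0 => // k IH T t0 ltk TS t0T.
have [ST|/subsetPn[v vS vT]] := boolP (S \subset T).
  by rewrite (leq_trans (subset_leq_card (linesS ST))) ?leq_addr.
have vST : v \in S :\: T by rewrite inE vS vT.
have [t [x [tT /setDP[xS xT] adj_tx]]] := connected_exit conn TS t0T vST.
have [b tx_b] : exists b, line b t = line b x.
  by move: adj_tx; rewrite (adjacentE true) => /andP[_ /orP[]] /eqP;
    [exists true | exists false].
have card_xT : #|S :\: T| = #|S :\: (x |: T)|.+1.
  by rewrite (cardsD1 x) inE xT xS setDDl setUC.
have xT_sub : x |: T \subset S by rewrite subUset sub1set xS TS.
have := IH (x |: T) x _ xT_sub (setU11 _ _); rewrite -card_xT => /(_ ltk).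
have xTb : line b x \in lines T by rewrite -tx_b mem_lines.
have := subset_leq_card (lines_setU1 xTb); rewrite cardsU1; lia.
Qed.

Lemma connected_lines_le S u : u \in S -> connected_set S -> (#|lines S| <= #|S| + 1)%N.
Proof.
move=> uS conn; have := @lines_grow S [set u] u conn.
by rewrite sub1set uS set11 card_lines_set1 (cardsD1 u S) uS addnAC => /(_ isT isT).
Qed.

Section Zigzag.
Variables (S : {set pt}) (z : pt).
Local Notation "l `_ i" := (nth z l i).

Definition zigzag (l : seq pt) := [/\ uniq l, all (mem S) l,
  forall i, (i.+1 < size l)%N -> adjacent l`_i l`_i.+1 &
  forall i, (i.+2 < size l)%N -> differ l`_i l`_i.+2].

Lemma zigzag_take k l : zigzag l -> zigzag (take k l).
Proof.
case=> uniq_l /allP lS adj_l diff_l; split; first exact: take_uniq.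
- by apply/allP => x /mem_take /lS.
- by move=> i; rewrite size_take_min => lt_i; rewrite !nth_take ?adj_l //; lia.
- by move=> i; rewrite size_take_min => lt_i; rewrite !nth_take ?diff_l //; lia.
Qed.

Lemma zigzag_cons w x l : zigzag (x :: l) -> w \in S -> w \notin x :: l ->
  adjacent w x -> ((0 < size l)%N -> differ w l`_0) -> zigzag (w :: x :: l).
Proof.
case=> uniq_l xlS adj_l diff_l wS wl adj_wx diff_wl; split => //=.
- by rewrite wl.
- by rewrite wS.
- by case=> [|i] //= /adj_l.
- by case=> [|i] /= lt_i; [apply: diff_wl | apply: diff_l].
Qed.

Lemma zigzag_circuit c : zigzag c -> (4 <= size c)%N ->
    adjacent c`_(size c).-1 c`_0 -> differ c`_(size c).-2 c`_0 ->
    differ c`_(size c).-1 c`_1 ->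
  is_circuit c.
Proof.
case=> uniq_c _ adj_c diff_c size_c adj_last diff_pen diff_last.
rewrite /is_circuit size_c uniq_c; apply/forallP => k /=; rewrite (tnth_nth z) /=.
have nth_mod i : nth c`_k c (i %% size c) = c`_(i %% size c).
  by apply: set_nth_default; rewrite ltn_pmod //; lia.
rewrite !nth_mod; suff [-> diff_k] : adjacent c`_k c`_((k + 1) %% size c) /\
                                    differ c`_k c`_((k + 2) %% size c).
  by rewrite differC in diff_k.
have [lt_k2|ge_k2] := ltnP k.+2 (size c).
  rewrite !modn_small ?addn1 ?addn2 ?(ltnW lt_k2) //.
  by split; [apply: adj_c (ltnW lt_k2) | apply: diff_c lt_k2].
have [s s_eq] : exists s, size c = s.+2 by exists (size c).-2; lia.
have [->|->] : (k = s :> nat) \/ (k = s.+1 :> nat) by have := ltn_ord k; lia.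
  rewrite s_eq /= in adj_last diff_pen diff_last *.
  by rewrite addn1 addn2 modnn modn_small //; split=> //; apply: adj_c; rewrite s_eq.
rewrite s_eq /= in adj_last diff_pen diff_last *.
by rewrite addn1 modnn (_ : s.+1 + 2 = 1 + s.+2)%N ?modnDr ?modn_small; [split | lia..].
Qed.

Lemma zigzag_size l : zigzag l -> (size l <= #|{: pt}|)%N.
Proof. by case=> uniq_l _ _ _; rewrite -(card_uniqP uniq_l) max_card. Qed.

Lemma zigzag_chord b x L : zigzag (x :: L) -> line b x != line b L`_0 ->
  has (fun v => line b v == line b x) L -> exists c, is_circuit c /\ all (mem S) c.
Proof.
(* The first later point on the b-line of x closes the zigzag into a circuit. *)
move=> zz xL0 hasL; have [uniq_xL xLS adj_xL diff_xL] := zz.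
set a := (X in has X L) in hasL; set k := find a L.
exists (take k.+2 (x :: L)).
split; last by apply/allP => v /mem_take; apply: (allP xLS).
have lt_kL : (k < size L)%N by rewrite -has_find.
have Lk_b : line b L`_k = line b x := eqP (nth_find z hasL).
have Lk_x : L`_k != x.
  by apply: contraTneq uniq_xL => Lk; rewrite /= -Lk mem_nth.
have [k' k_eq] : exists k', k = k'.+1.
  by case: (k) Lk_b => [|k'] Lk_b; [rewrite Lk_b eqxx in xL0 | exists k'].
have k'_gt0 : (0 < k')%N.
  case: k' k_eq => // k_eq; rewrite k_eq in lt_kL Lk_b.
  by have := diff_xL 0%N lt_kL; rewrite (differE b) /= Lk_b eqxx.
have Lk'_b : line b L`_k' != line b x.
  by have := @before_find _ z a L k'; rewrite -/k k_eq ltnSn => /(_ isT)/negbT.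
have adj_k : adjacent L`_k' L`_k by rewrite k_eq; apply: (adj_xL k'.+1); rewrite /= -k_eq.
have adj_x0 : adjacent x L`_0 by apply: (adj_xL 0%N); exact: leq_ltn_trans (leq0n k) lt_kL.
have size_c : size (take k.+2 (x :: L)) = k.+2 by rewrite size_takel.
apply: zigzag_circuit; rewrite ?size_c.
- exact: zigzag_take.
- by rewrite k_eq !ltnS.
- by rewrite !nth_take //= (adjacentE b) Lk_x Lk_b eqxx.
- rewrite !nth_take //= k_eq /= (differE b) Lk'_b /=.
  by rewrite (adjacent_line_neqN adj_k) ?Lk_b // (neq_line_eqN Lk_x Lk_b).
- rewrite !nth_take //= (differE b) Lk_b xL0 /= -(adjacent_line_neqN adj_x0 xL0).
  exact: neq_line_eqN Lk_x Lk_b.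
Qed.

Hypothesis no_leaf :
  forall b x, x \in S -> exists2 w, w \in S :\ x & line b w = line b x.

Lemma zigzag_grow x L : zigzag (x :: L) ->
  (exists c, is_circuit c /\ all (mem S) c) \/ exists2 l, zigzag l & size l = (size L).+2.
Proof.
move=> zz; have [uniq_xL xLS adj_xL _] := zz.
have xS : x \in S by have /andP[] := xLS.
have [b xL0] : exists b, (0 < size L)%N -> line b x != line b L`_0.
  case: L uniq_xL {zz xLS adj_xL} => [|y L] uniq_xL; first by exists true.
  have xy : x != y by apply: contraTneq uniq_xL => ->; rewrite /= inE eqxx.
  by move: xy; rewrite (pt_eq_lines true) negb_and => /orP[] xy; [exists true | exists false].
have [w /setD1P[wx wS] wb] := no_leaf b xS.
have [wL|wL] := boolP (w \in L).
  left; apply: (zigzag_chord zz); first by apply: xL0; case: (L) wL.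
  by apply/hasP; exists w; rewrite // wb.
right; exists (w :: x :: L) => //; apply: zigzag_cons => //.
- by rewrite inE negb_or wx.
- by rewrite (adjacentE b) wx wb eqxx.
move=> L_gt0; have xL0b := xL0 L_gt0; rewrite (differE b) wb xL0b /=.
by rewrite -(adjacent_line_neqN (adj_xL 0%N L_gt0) xL0b) neq_line_eqN.
Qed.

Lemma no_leaf_circuit : z \in S -> exists c, is_circuit c /\ all (mem S) c.
Proof.
move=> zS; suff [//|[l zz size_l]] : (exists c, is_circuit c /\ all (mem S) c) \/
                                   exists2 l, zigzag l & size l = #|{: pt}|.+1.
  by have := zigzag_size zz; rewrite size_l ltnn.
elim: #|{: pt}| => [|k [circ|[[|x L] zz size_l]]]; [|by left|by []|].
  by right; exists [:: z]; split; rewrite //= zS.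
move: size_l => -[<-]; exact: zigzag_grow zz.
Qed.

End Zigzag.

Lemma circuit_freeS S T : T \subset S -> circuit_free S -> circuit_free T.
Proof.
move=> TS free [c [circ cT]]; apply: free; exists c; split=> //.
by apply/allP => v /(allP cT); apply: (subsetP TS).
Qed.

Lemma circuit_free_leaf S x : circuit_free S -> x \in S ->
  exists b, exists2 y, y \in S & forall w, w \in S -> line b w = line b y -> w = y.
Proof.
move=> free xS.
have [/exists_inP[y yS /existsP[b /forall_inP leaf]]|not_leaf] :=
  boolP [exists y in S, exists b, [forall w in S, (line b w == line b y) ==> (w == y)]].
  by exists b, y => // w wS /eqP wy; apply/eqP; move: (leaf w wS); rewrite wy.
case: free; apply: (@no_leaf_circuit S x) => // b y yS.
move: not_leaf; rewrite negb_exists_in => /forall_inP/(_ y yS).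
rewrite negb_exists => /forallP/(_ b); rewrite negb_forall_in => /exists_inP[w wS].
by rewrite negb_imply => /andP[/eqP wy w_y]; exists w; rewrite // in_setD1 w_y.
Qed.

Lemma lines_leaf_proper S b y : y \in S ->
    (forall w, w \in S -> line b w = line b y -> w = y) ->
  lines (S :\ y) \proper lines S.
Proof.
move=> yS leaf; rewrite properE linesS ?subD1set //=.
apply/subsetPn; exists (line b y); first exact: mem_lines.
rewrite inE; apply/exists_inP => -[w /setD1P[wy wS] /existsP[c /eqP wb]].
have {c}wb : line b w = line b y by case: b c wb {leaf} => -[].
by move: wy; rewrite (leaf w wS wb) eqxx.
Qed.

Lemma card_lines_gt1 S x : x \in S -> (1 < #|lines S|)%N.
Proof. by move=> xS; rewrite -(card_lines_set1 x) subset_leq_card // linesS ?sub1set. Qed.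

Lemma circuit_free_card_lines S x : x \in S -> circuit_free S -> (#|S| < #|lines S|)%N.
Proof.
have [k] := ubnP #|S|; elim: k S x => // k IH S x ltSk xS free.
have [b [y yS leaf]] := circuit_free_leaf free xS.
have lt_lines := proper_card (lines_leaf_proper yS leaf).
rewrite (cardsD1 y S) yS add1n in ltSk *.
have [S'0|[w wS']] := set_0Vmem (S :\ y).
  by rewrite S'0 cards0 (card_lines_gt1 yS).
have := IH (S :\ y) w ltSk wS' (circuit_freeS (subD1set S y) free).
by move/leq_ltn_trans; apply.
Qed.

Lemma tree_card_lines S x : x \in S -> is_tree S -> #|lines S| = (#|S| + 1)%N.
Proof.
move=> xS [conn free]; apply/anti_leq.
by rewrite (connected_lines_le xS conn) addn1 (circuit_free_card_lines xS free).
Qed.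

End Lines.

Local Open Scope ring_scope.

Lemma coupling_supp_lines (R : realType) m n (p : 'I_m -> R) (q : 'I_n -> R)
    (P : 'M[R]_(m, n)) :
  (forall i, 0 < p i) -> (forall j, 0 < q j) -> coupling p q P -> lines (supp P) = setT.
Proof.
move=> p_gt0 q_gt0 [P_ge0 rowP colP]; apply/setP => L; rewrite !inE.
case: L => [i|j].
- have [j /andP[_ Pij]] : exists j, true && (0 < P i j).
    by apply: psumr_neq0P => [j _|]; rewrite ?P_ge0 // rowP; apply/eqP; rewrite gt_eqF.
  by apply/exists_inP; exists (i, j); rewrite ?inE ?gt_eqF //; apply/existsP; exists true.
- have [i /andP[_ Pij]] : exists i, true && (0 < P i j).
    by apply: psumr_neq0P => [i _|]; rewrite ?P_ge0 // colP; apply/eqP; rewrite gt_eqF.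
  by apply/exists_inP; exists (i, j); rewrite ?inE ?gt_eqF //; apply/existsP; exists false.
Qed.

Theorem lemma2p2 (R : realType) (m n : nat) (p : 'I_m -> R) (q : 'I_n -> R)
    (P : 'M[R]_(m, n)) :
  (2 <= m)%N -> (2 <= n)%N ->
  (forall i, 0 < p i) -> \sum_(i < m) p i = 1 ->
  (forall j, 0 < q j) -> \sum_(j < n) q j = 1 ->
  coupling p q P -> local_optimal P -> is_tree (supp P) ->
  #|supp P| = (m + n - 1)%N.
Proof.
move=> m_ge2 _ p_gt0 _ q_gt0 _ PC _ tree.
have full := coupling_supp_lines p_gt0 q_gt0 PC.
have : inl (Ordinal (ltnW m_ge2)) \in lines (supp P) by rewrite full inE.
rewrite inE => /exists_inP[x xP _].
have := tree_card_lines xP tree; rewrite full cardsT card_sum !card_ord => ->.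
by rewrite addnK.
Qed.
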